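(* Let $U$ be a $p$-qubit unitary, $\mathcal{C}$ a quantum code, and $\mathcal{F}$ a family of circuits closed under composition. Then $U$ is $\mathcal{F}$-addressable on $\mathcal{C}$ if and only if $U$ is $\mathcal{F}$-parallel addressable on $\mathcal{C}$.
   Context: Fix logical Pauli operators for the $k$ logical qubits of $\mathcal{C}$, so that each logical operator (unitary preserving the codespace) has a well-defined logical action. $U$ is $\mathcal{F}$-addressable on $\mathcal{C}$ if for every ordered $p$-tuple $t$ of logical qubits there is a circuit in $\mathcal{F}$ that is a logical operator with logical action $\bar U$ on $t$ (and identity on the other logical qubits). $U$ is $\mathcal{F}$-parallel addressable on $\mathcal{C}$ if for every set $I$ of pairwise disjoint ordered $p$-tuples of logical qubits there is a circuit in $\mathcal{F}$ that is a logical operator with logical action $\bar U$ applied to every tuple in $I$ (and identity on the other logical qubits). *)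

From HB Require Import structures.
From mathcomp Require Import all_boot all_order all_algebra.
Set Implicit Arguments. Unset Strict Implicit. Unset Printing Implicit Defensive.
Import Order.TTheory GRing.Theory Num.Theory.
Local Open Scope ring_scope.

(* Computational basis states of k qubits: bit strings 'I_k -> bool.
   Operators on k qubits are square matrices indexed by 'I_#|basis|,
   the basis state x corresponding to the index enum_rank x. *)
Notation qbasis k := {ffun 'I_k -> bool}.
Notation qdim k := #|{: qbasis k}|.

Definition adjmx (C : numClosedFieldType) m n (A : 'M[C]_(m, n)) : 'M[C]_(n, m) :=
  (map_mx Num.conj A)^T.

Definition qisometry (C : numClosedFieldType) m n (A : 'M[C]_(m, n)) : Prop :=
  adjmx A *m A = 1%:M.

Definition qunitary (C : numClosedFieldType) m (A : 'M[C]_m) : Prop :=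
  adjmx A *m A = 1%:M /\ A *m adjmx A = 1%:M.


(* The k-qubit operator applying the p-qubit operator U to the qubits of the
   tuple t (the a-th tensor factor of U acting on qubit t a), and the identity
   on all other qubits. *)
Definition embed (C : numClosedFieldType) (p k : nat)
    (U : 'M[C]_(qdim p)) (t : {ffun 'I_p -> 'I_k}) : 'M[C]_(qdim k) :=
  \matrix_(i, j)
    let x : qbasis k := enum_val i in
    let y : qbasis k := enum_val j in
    if [forall q, (q \notin codom t) ==> (x q == y q)]
    then U (enum_rank ([ffun a => x (t a)] : qbasis p))
           (enum_rank ([ffun a => y (t a)] : qbasis p))
    else 0.

Definition par_embed (C : numClosedFieldType) (p k : nat)
    (U : 'M[C]_(qdim p)) (I : {set {ffun 'I_p -> 'I_k}}) : 'M[C]_(qdim k) :=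
  \big[@mulmx C _ _ _/1%:M]_(t in I) embed U t.

(* The code C is given by an encoding isometry E from the k logical qubits into
   the n physical qubits; its image is the codespace, and E is the encoding
   fixed by the choice of logical Pauli operators. *)
Definition logical_with_action (C : numClosedFieldType) (n k : nat)
    (E : 'M[C]_(qdim n, qdim k)) (L : 'M[C]_(qdim n)) (V : 'M[C]_(qdim k)) : Prop :=
  qunitary L /\ L *m E = E *m V.

(* Circuits: an abstract type Circ with semantics sem : Circ -> n-qubit matrix;
   a family of circuits is a predicate F on Circ. *)
Definition addressable (C : numClosedFieldType) (n k p : nat)
    (E : 'M[C]_(qdim n, qdim k)) (Circ : Type) (sem : Circ -> 'M[C]_(qdim n))
    (F : Circ -> Prop) (U : 'M[C]_(qdim p)) : Prop :=
  forall t : {ffun 'I_p -> 'I_k}, injective t ->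
    exists c, F c /\ logical_with_action E (sem c) (embed U t).

Definition parallel_addressable (C : numClosedFieldType) (n k p : nat)
    (E : 'M[C]_(qdim n, qdim k)) (Circ : Type) (sem : Circ -> 'M[C]_(qdim n))
    (F : Circ -> Prop) (U : 'M[C]_(qdim p)) : Prop :=
  forall I : {set {ffun 'I_p -> 'I_k}},
    I != set0 ->
    (forall t, t \in I -> injective t) ->
    (forall t1 t2, t1 \in I -> t2 \in I -> t1 != t2 ->
       [disjoint codom t1 & codom t2]) ->
    exists c, F c /\ logical_with_action E (sem c) (par_embed U I).

From mathcomp Require Import all_boot all_order all_algebra.
Set Implicit Arguments. Unset Strict Implicit. Unset Printing Implicit Defensive.
Local Open Scope ring_scope.

(* A parallel logical action is, by definition, the ordered product of the
   single-tuple actions, and logical actions implementable by circuits of F are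
   closed under products since F is closed under composition; conversely a
   single tuple is a one-element parallel family. *)

Lemma big_ind_has (R : Type) (K : R -> Prop) (idx : R) (op : R -> R -> R)
    (opr1 : right_id idx op) (Kop : forall x y, K x -> K y -> K (op x y))
    (I : Type) (r : seq I) (P : pred I) (F : I -> R) :
  has P r -> (forall i, P i -> K (F i)) ->
  K (\big[op/idx]_(i <- r | P i) F i).
Proof.
move=> hasPr K_F; elim: r hasPr => [//|a r IHr] /= hasP_ar; rewrite big_cons.
have [/IHr Kr | noPr] := boolP (has P r).
  by case: ifP => // Pa; apply: Kop (K_F a Pa) Kr.
have Pa : P a by move: hasP_ar; rewrite (negbTE noPr) orbF.
by rewrite Pa big_hasC // opr1; apply: K_F.
Qed.

Lemma adjmx_mul (C : numClosedFieldType) m n q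
    (A : 'M[C]_(m, n)) (B : 'M[C]_(n, q)) :
  adjmx (A *m B) = adjmx B *m adjmx A.
Proof. by rewrite /adjmx map_mxM trmx_mul. Qed.

Lemma qunitary_mul (C : numClosedFieldType) m (A B : 'M[C]_m) :
  qunitary A -> qunitary B -> qunitary (A *m B).
Proof.
move=> [A'A AA'] [B'B BB']; split; rewrite adjmx_mul.
  by rewrite mulmxA -(mulmxA (adjmx B)) A'A mulmx1 B'B.
by rewrite mulmxA -(mulmxA A) BB' mulmx1 AA'.
Qed.

Lemma logical_with_action_mul (C : numClosedFieldType) (n k : nat)
    (E : 'M[C]_(qdim n, qdim k)) (L1 L2 : 'M[C]_(qdim n)) (V1 V2 : 'M[C]_(qdim k)) :
  logical_with_action E L1 V1 -> logical_with_action E L2 V2 ->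
  logical_with_action E (L1 *m L2) (V1 *m V2).
Proof.
move=> [uL1 L1E] [uL2 L2E]; split; first exact: qunitary_mul.
by rewrite -mulmxA L2E mulmxA L1E mulmxA.
Qed.

Lemma par_embed_set1 (C : numClosedFieldType) (p k : nat)
    (U : 'M[C]_(qdim p)) (t : {ffun 'I_p -> 'I_k}) :
  par_embed U [set t] = embed U t.
Proof. by rewrite /par_embed big_set1E mulmx1. Qed.

Section Implementable.

Variables (C : numClosedFieldType) (n k : nat) (E : 'M[C]_(qdim n, qdim k)).
Variables (Circ : Type) (sem : Circ -> 'M[C]_(qdim n)).
Variables (comp : Circ -> Circ -> Circ) (F : Circ -> Prop).
Hypothesis sem_comp : forall c1 c2, sem (comp c1 c2) = sem c2 *m sem c1.
Hypothesis F_comp : forall c1 c2, F c1 -> F c2 -> F (comp c1 c2).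

Definition implementable (V : 'M[C]_(qdim k)) : Prop :=
  exists c, F c /\ logical_with_action E (sem c) V.

Lemma implementable_mul (V1 V2 : 'M[C]_(qdim k)) :
  implementable V1 -> implementable V2 -> implementable (V1 *m V2).
Proof.
move=> [c1 [Fc1 L1]] [c2 [Fc2 L2]]; exists (comp c2 c1); split.
  exact: F_comp.
by rewrite sem_comp; apply: logical_with_action_mul.
Qed.

Lemma implementable_par_embed (p : nat) (U : 'M[C]_(qdim p))
    (I : {set {ffun 'I_p -> 'I_k}}) :
  I != set0 -> (forall t, t \in I -> implementable (embed U t)) ->
  implementable (par_embed U I).
Proof.
case/set0Pn=> t0 It0 implI; apply: big_ind_has implI.
- exact: mulmx1.
- exact: implementable_mul.
- by apply/hasP; exists t0; first exact: mem_index_enum.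
Qed.

End Implementable.

Theorem lemma1 (C : numClosedFieldType) (n k p : nat)
    (E : 'M[C]_(qdim n, qdim k)) (hE : qisometry E)
    (U : 'M[C]_(qdim p)) (hU : qunitary U)
    (Circ : Type) (sem : Circ -> 'M[C]_(qdim n))
    (comp : Circ -> Circ -> Circ)
    (hcomp : forall c1 c2, sem (comp c1 c2) = (sem c2 *m sem c1)%R)
    (F : Circ -> Prop)
    (hF : forall c1 c2, F c1 -> F c2 -> F (comp c1 c2)) :
  addressable E sem F U <-> parallel_addressable E sem F U.
Proof.
split=> [addrU I I_neq0 injI _ | paddrU t injt].
  apply: (implementable_par_embed hcomp hF I_neq0) => t It.
  exact: addrU (injI t It).
rewrite -par_embed_set1; apply: paddrU.
- by apply/set0Pn; exists t; rewrite set11.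
- by move=> t1 /set1P ->.
- by move=> t1 t2 /set1P -> /set1P ->; rewrite eqxx.
Qed.
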